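(* Let $W=(w_{ij})\in (\mathbb{R}_{>0})^{n\times m}$, $T=T(W)=(t_{ij})$ and $s\in\mathbb{C}$. Then $$\sum_{i=1}^p \frac{s}{w_{i,p-i+1}} + \sum {}^{'} \frac{1}{w_{ij}} = \mathcal{E}_s(T),$$ where $p=n\wedge m$ and $\sum^{'}$ denotes the sum over $1\le i\le n,\ 1\le j\le m$ such that $j\ne p-i+1$.
   Context: The geometric RSK map $T$ on $(\mathbb{R}_{>0})^{n\times m}$ is defined through local moves. For $2\le i\le n$, $2\le j\le m$, the map $l_{ij}$ replaces the submatrix $\begin{pmatrix} x_{i-1,j-1}& x_{i-1,j}\\ x_{i,j-1}& x_{ij}\end{pmatrix}=\begin{pmatrix} a& b\\ c& d\end{pmatrix}$ by $\begin{pmatrix} bc/(ab+ac) & b\\ c& d(b+c) \end{pmatrix}$, leaving the other entries unchanged. For $2\le i\le n$, $l_{i1}$ replaces $x_{i1}$ by $x_{i-1,1}x_{i1}$; for $2\le j\le m$, $l_{1j}$ replaces $x_{1j}$ by $x_{1,j-1}x_{1j}$; $l_{11}$ is the identity. Set $\pi^j_i=l_{ij}\circ\cdots\circ l_{i1}$, $R_i=\pi_1^{m-i+1}\circ\cdots\circ\pi^m_i$ if $i\le m$ and $R_i=\pi^1_{i-m+1}\circ\cdots\circ\pi^m_i$ if $i\ge m$, and $T=R_n\circ\cdots\circ R_1$. For $X=(x_{ij})\in(\mathbb{R}_{>0})^{n\times m}$ and $s\in\mathbb{C}$, $\mathcal{E}_s(X)=\frac{s}{x_{11}}+\sum_{i,j}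 \frac{x_{i-1,j}+x_{i,j-1}}{x_{ij}}$, the sum over $1\le i\le n$, $1\le j\le m$, with the convention $x_{ij}=0$ if $i=0$ or $j=0$. *)

(* Matrices in (R_{>0})^{n x m} are encoded as
   functions nat -> nat -> R, read with 1-based indices (i,j), 1<=i<=n,
   1<=j<=m; entries outside that range are irrelevant. *)
From HB Require Import structures.
From mathcomp Require Import all_boot all_order all_algebra.
From mathcomp Require Import reals complex.
Set Implicit Arguments. Unset Strict Implicit. Unset Printing Implicit Defensive.
Import Order.TTheory GRing.Theory Num.Theory.
Local Open Scope ring_scope.

Section GRSK.
Variable R : realType.

Definition mx := nat -> nat -> R.

Definition upd (X : mx) (i j : nat) (v : R) : mx :=
  fun a b => if (a == i) && (b == j) then v else X a b.

Definition lmove (i j : nat) (X : mx) : mx :=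
  if (2 <= i)%N && (2 <= j)%N then
    let a := X i.-1 j.-1 in let b := X i.-1 j in
    let c := X i j.-1 in let d := X i j in
    upd (upd X i.-1 j.-1 (b * c / (a * b + a * c))) i j (d * (b + c))
  else if (2 <= i)%N && (j == 1)%N then upd X i 1 (X i.-1 1%N * X i 1%N)
  else if (i == 1)%N && (2 <= j)%N then upd X 1 j (X 1%N j.-1 * X 1%N j)
  else X.

Definition pimove (i j : nat) (X : mx) : mx :=
  foldl (fun Y k => lmove i k Y) X (iota 1 j).

(* R_i = pi^{m-k}_{i-k} composed for k = min(i,m)-1, ..., 1, 0
   (k = 0, i.e. pi^m_i, applied first). For i <= m this is
   pi^{m-i+1}_1 o ... o pi^m_i, and for i >= m it is pi^1_{i-m+1} o ... o pi^m_i. *)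
Definition Rmove (m i : nat) (X : mx) : mx :=
  foldl (fun Y k => pimove (i - k) (m - k) Y) X (iota 0 (minn i m)).

Definition gRSK (n m : nat) (X : mx) : mx :=
  foldl (fun Y i => Rmove m i Y) X (iota 1 n).

Definition xz (X : mx) (i j : nat) : R :=
  if (i == 0)%N || (j == 0)%N then 0 else X i j.

Local Open Scope complex_scope.

Definition energy (n m : nat) (s : R[i]) (X : mx) : R[i] :=
  (s / (X 1%N 1%N)%:C +
   \sum_(1 <= i < n.+1) \sum_(1 <= j < m.+1)
      ((xz X i.-1 j + xz X i j.-1) / X i j)%:C)%R.

End GRSK.

(* Both sides split into a part proportional to s and an s-free part.

   Row i of pimove i j X is given by z_b = x_{ib} (x_{i-1,b} + z_{b-1}), and row i-1
   becomes z_b x_{i-1,b+1} / (x_{i-1,b} (x_{i-1,b+1} + z_b)) for b < j. Using these closed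
   forms, R_k turns the energy sum of rows 1..k-1 plus sum_j 1/x_{kj} into the energy
   sum of rows 1..k: passing from row k-1 to row k is a telescoping identity in the
   column index. Hence the s-free part of E_s(T), plus 1/t_11, is sum_{ij} 1/w_ij.

   For the s-part, a local identity between two consecutive rows shows that
   sum_{i<=k} x_{i,c-1}/x_{ic} + sum_{k<i<=p} 1/x_{i,p-i+1}, with c = p-k+1, is
   unchanged by R_k. At k = 0 it is the antidiagonal sum of 1/w, at k = p it is
   1/x_11, and the steps R_k with k > p do not touch the entry (1,1). *)

From HB Require Import structures.
From mathcomp Require Import all_boot all_order all_algebra.
From mathcomp Require Import reals complex boolp.
From mathcomp Require Import zify ring lra.
Set Implicit Arguments. Unset Strict Implicit. Unset Printing Implicit Defensive.
Import Order.TTheory GRing.Theory Num.Theory.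
Local Open Scope ring_scope.

Section RowTelescope.
(* A, B, C are rows k, k+1, k+2 of the input (bordered), z and P are rows k+2 and k+1
   after pimove (k+2) (m+1), and y is row k+1 of the output of R_{k+2}. *)
Variables (F : realFieldType) (m : nat) (A B C z P y : nat -> F).
Hypotheses (B_gt0 : forall l, (0 < l <= m.+1)%N -> 0 < B l)
           (C_gt0 : forall l, (0 < l <= m.+1)%N -> 0 < C l).
Hypotheses (z0 : z 0%N = 0) (zS : forall l, z l.+1 = C l.+1 * (B l.+1 + z l)).
Hypothesis PE : forall l, (0 < l)%N -> P l = B l.+1 * z l / (B l * B l.+1 + B l * z l).
Hypotheses (y0 : y 0%N = B 0%N) (y_last : y m.+1 = B m.+1)
           (yS : forall l, (l < m)%N -> y l.+1 = P l.+1 * (A l.+1 + y l)).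

Lemma row_z_ge0 l : (l <= m.+1)%N -> 0 <= z l.
Proof.
elim: l => [|l IHl] l_le; first by rewrite z0.
have [b_gt0 c_gt0] : 0 < B l.+1 /\ 0 < C l.+1 by split; [apply: B_gt0 | apply: C_gt0]; lia.
have z_ge0 : 0 <= z l by apply: IHl; lia.
by rewrite zS mulr_ge0 ?addr_ge0 // ltW.
Qed.

Lemma row_ratio_local l : (0 < l <= m)%N ->
  (y l + z l.-1) / z l - (A l + B l.-1) / B l - 1 / C l + 1 / P l
  = (y l.-1 - B l.-1) / B l - (y l - B l) / B l.+1.
Proof.
case: l => [//|l] l_le /=.
have [b_gt0 b'_gt0 c_gt0] : [/\ 0 < B l.+1, 0 < B l.+2 & 0 < C l.+1].
  by split; [apply: B_gt0 | apply: B_gt0 | apply: C_gt0]; lia.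
have s_gt0 : 0 < B l.+1 + z l by rewrite ltr_wpDr ?row_z_ge0 //; lia.
rewrite yS; last by lia.
have d_gt0 : 0 < B l.+1 * B l.+2 + B l.+1 * (C l.+1 * (B l.+1 + z l)).
  by rewrite addr_gt0 ?mulr_gt0.
by rewrite PE // zS; field; rewrite !gt_eqF.
Qed.

Lemma row_ratio_telescope :
  \sum_(1 <= l < m.+1) 1 / P l + (A m.+1 + y m) / B m.+1
    + \sum_(1 <= l < m.+2) (y l + z l.-1) / z l
  = \sum_(1 <= l < m.+2) (A l + B l.-1) / B l + \sum_(1 <= l < m.+2) 1 / C l.
Proof.
pose T l := (y l.-1 - B l.-1) / B l.
have local_sum : \sum_(1 <= l < m.+1) ((y l + z l.-1) / z l - (A l + B l.-1) / B l
    - 1 / C l + 1 / P l) = T 1%N - T m.+1.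
  rewrite (telescope_sumr_eq (fun l => - T l)) //; first by rewrite opprK addrC.
  move=> l l_le.
  by rewrite row_ratio_local /T /=; [rewrite opprK addrC | lia].
have last_z : (B m.+1 + z m) / z m.+1 = 1 / C m.+1.
  have [b_gt0 c_gt0] : 0 < B m.+1 /\ 0 < C m.+1 by split; [apply: B_gt0 | apply: C_gt0]; lia.
  have s_gt0 : 0 < B m.+1 + z m by rewrite ltr_wpDr ?row_z_ge0.
  by rewrite zS; field; rewrite !gt_eqF.
move: local_sum; rewrite !big_split /= !sumrN /T /= y0 subrr mul0r.
rewrite !(big_nat_recr m.+1) //= y_last last_z mulrBl !mulrDl.
lra.
Qed.

End RowTelescope.

Lemma sum_antidiag_compl (V : zmodType) (f : nat -> nat -> V) n m p :
  (p <= n)%N -> (p <= m)%N ->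
  \sum_(1 <= i < n.+1) \sum_(1 <= j < m.+1 | (i + j != p.+1)%N) f i j
  = \sum_(1 <= i < n.+1) \sum_(1 <= j < m.+1) f i j - \sum_(1 <= i < p.+1) f i (p - i).+1.
Proof.
move=> p_le_n p_le_m.
have row i : (1 <= i < n.+1)%N -> \sum_(1 <= j < m.+1 | (i + j != p.+1)%N) f i j
    = \sum_(1 <= j < m.+1) f i j - (if (i <= p)%N then f i (p - i).+1 else 0).
  move=> /andP[i_gt0 _]; rewrite [in RHS](bigID (fun j => (i + j != p.+1)%N)) /=.
  suff -> : \sum_(1 <= j < m.+1 | ~~ (i + j != p.+1)%N) f i j
      = if (i <= p)%N then f i (p - i).+1 else 0 by rewrite addrK.
  rewrite big_nat_cond (eq_bigl (fun j => (i <= p)%N && (j == (p - i).+1))).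
    by rewrite big_nat1_cond_eq; case: ifP => //; case: ifP => //; lia.
  by move=> j; apply/idP/idP; lia.
rewrite (eq_big_nat _ _ row) sumrB; congr (_ - _).
by rewrite -big_mkcond [RHS](big_nat_widen _ _ n.+1).
Qed.

Section GeometricRSK.
Variable R : realType.
Implicit Types X Y W : mx R.

(* The 1 at (1,0) makes energy_term contribute 1/x_11 at (1,1), see energy_sumE. *)
Definition border X (i j : nat) : R :=
  if i == 0%N then 0 else if j == 0%N then (i == 1%N)%:R else X i j.

(* Rows i and i-1 of pimove i j X, in closed form (pimoveE). *)
Fixpoint pirow X (i j : nat) : R :=
  if j is j'.+1 then X i j * (border X i.-1 j + pirow X i j') else border X i 0.
Arguments pirow : simpl never.

Lemma pirow0 X i : pirow X i 0 = border X i 0.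
Proof. by []. Qed.

Lemma pirowS X i j : pirow X i j.+1 = X i j.+1 * (border X i.-1 j.+1 + pirow X i j).
Proof. by []. Qed.

Definition piup X (i j : nat) : R :=
  X i.-1 j.+1 * pirow X i j / (X i.-1 j * X i.-1 j.+1 + X i.-1 j * pirow X i j).

Definition pimx X (i j : nat) : mx R := fun a b =>
  if (a == i) && (0 < b <= j)%N then pirow X i b
  else if (1 < i)%N && (a == i.-1) && (0 < b < j)%N then piup X i b
  else X a b.

Lemma pimx_row X i j b : (0 < i)%N ->
  pimx X i j i b = if (0 < b <= j)%N then pirow X i b else X i b.
Proof.
move=> i_gt0; rewrite /pimx eqxx /=; case: ifP => // _.
by rewrite (_ : (i == i.-1) = false) ?andbF //; lia.
Qed.

Lemma pimx_up X i j b : (1 < i)%N ->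
  pimx X i j i.-1 b = if (0 < b < j)%N then piup X i b else X i.-1 b.
Proof. by move=> i_gt1; rewrite /pimx (_ : (i.-1 == i) = false) /= ?i_gt1 ?eqxx //; lia. Qed.

Lemma pimx_id X i j a b : ~~ ((a == i) && (0 < b <= j)%N) ->
  ~~ ((1 < i)%N && (a == i.-1) && (0 < b < j)%N) -> pimx X i j a b = X a b.
Proof. by rewrite /pimx => /negbTE -> /negbTE ->. Qed.

Lemma lmove_pimx i j X : (0 < i)%N -> lmove i j.+1 (pimx X i j) = pimx X i j.+1.
Proof.
move=> i_gt0; apply: funext => a; apply: funext => b.
rewrite /lmove /upd /pimx.
case: i i_gt0 => [//|[|i]] _; case: j => [|j] //=;
  repeat case: ifP; move=> *; try (exfalso; lia); try done.
- have [-> ->] : a = 1%N /\ b = 1%N by lia.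
  by rewrite pirowS pirow0 /border /=; ring.
- have -> : b = j.+2 by lia.
  by rewrite [in RHS]pirowS /border /=; ring.
- have -> : b = 1%N by lia.
  by rewrite pirowS pirow0 /border /=; ring.
- have -> : b = j.+2 by lia.
  by rewrite [in RHS]pirowS /border.
- by have -> : b = j.+1 by lia.
Qed.

Lemma pimoveE i j X : (0 < i)%N -> pimove i j X = pimx X i j.
Proof.
move=> i_gt0; elim: j => [|j IHj].
  by apply: funext => a; apply: funext => b; rewrite pimx_id //; lia.
rewrite -lmove_pimx // -IHj /pimove.
by rewrite -[in iota _ _](addn1 j) iotaD foldl_cat add1n.
Qed.

Lemma Rmoven0 m X : Rmove m 0 X = X.
Proof. by rewrite /Rmove min0n. Qed.

Lemma Rmove0n k X : Rmove 0 k X = X.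
Proof. by rewrite /Rmove minn0. Qed.

Lemma RmoveSS m k X : Rmove m.+1 k.+1 X = Rmove m k (pimx X k.+1 m.+1).
Proof.
rewrite /Rmove minnSS /= !subn0 pimoveE //.
by elim: (minn k m) 0%N (pimx X _ _) => [//|t IHt] s Y /=; rewrite !subSS IHt.
Qed.

Lemma Rmove_out m k X a b : ((k < a) || (m + a < b + k))%N -> Rmove m k X a b = X a b.
Proof.
elim: k m X => [|k IHk] [|m] X out_ab; rewrite ?Rmoven0 ?Rmove0n //.
by rewrite RmoveSS IHk ?pimx_id //; lia.
Qed.

Lemma Rmove_last_row m k X l : (0 < k)%N -> (0 < l <= m)%N ->
  Rmove m k X k l = pirow X k l.
Proof.
case: k => [//|k]; case: m => [|m] _ l_le; first by lia.
by rewrite RmoveSS Rmove_out ?pimx_row ?l_le //; lia.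
Qed.

Lemma border_eq X Y a b : (a != 0%N -> b != 0%N -> X a b = Y a b) ->
  border X a b = border Y a b.
Proof. by rewrite /border; case: eqP => // /eqP a0; case: eqP => // /eqP b0 ->. Qed.

Lemma border_Rmove_last_row m k X l : (0 < k)%N -> (l <= m)%N ->
  border (Rmove m k X) k l = pirow X k l.
Proof.
move=> k_gt0 l_le; case: l => [|l] in l_le *.
  by rewrite pirow0; apply: border_eq; lia.
by rewrite /border (_ : (k == 0%N) = false) ?Rmove_last_row //; lia.
Qed.

Lemma gRSKS k m X : gRSK k.+1 m X = Rmove m k.+1 (gRSK k m X).
Proof. by rewrite /gRSK -[in iota _ _](addn1 k) iotaD foldl_cat add1n. Qed.

Lemma gRSK_out k m X a b : (k < a)%N -> gRSK k m X a b = X a b.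
Proof. by elim: k => [//|k IHk] k_lt; rewrite gRSKS Rmove_out ?IHk //; lia. Qed.

Lemma gRSK11 k m X : gRSK k m X 1%N 1%N = gRSK (minn k m) m X 1%N 1%N.
Proof.
elim: k => [|k IHk]; first by rewrite min0n.
case: (leqP k.+1 m) => [//|m_lt].
by rewrite gRSKS Rmove_out ?IHk; [congr gRSK|]; lia.
Qed.

Definition positive X (n m : nat) :=
  forall i j, (1 <= i <= n)%N -> (1 <= j <= m)%N -> 0 < X i j.

Lemma positive_le X n m n' m' :
  positive X n m -> (n' <= n)%N -> (m' <= m)%N -> positive X n' m'.
Proof. by move=> Xpos n_le m_le i j i_le j_le; apply: Xpos; lia. Qed.

Section Positivity.
Variables (X : mx R) (n m : nat).
Hypothesis Xpos : positive X n m.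

Lemma border_ge0 i j : (i <= n)%N -> (j <= m)%N -> 0 <= border X i j.
Proof.
rewrite /border; case: eqP => // i_neq0; case: eqP => [_ _ _|j_neq0 i_le j_le].
  exact: ler0n.
by apply/ltW/Xpos; lia.
Qed.

Lemma pirow_gt0 i j : (0 < i <= n)%N -> (0 < j <= m)%N -> 0 < pirow X i j.
Proof.
move=> i_le; elim: j => [//|j IHj] j_le.
have x_gt0 : 0 < X i j.+1 by apply: Xpos; lia.
rewrite pirowS mulr_gt0 //.
case: j IHj j_le x_gt0 => [|j] IHj j_le _.
  rewrite pirow0 /border; case: i i_le {IHj} => [|[|i]] i_le //=.
    by rewrite add0r ltr01.
  by rewrite addr0 Xpos //; lia.
by rewrite ltr_wpDl ?IHj ?border_ge0 //; lia.
Qed.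

Lemma pirow_ge0 i j : (0 < i <= n)%N -> (j <= m)%N -> 0 <= pirow X i j.
Proof.
move=> i_le; case: j => [_|j j_le]; last by rewrite ltW ?pirow_gt0.
by rewrite pirow0 border_ge0 //; lia.
Qed.

Lemma piup_gt0 i j : (1 < i <= n)%N -> (0 < j < m)%N -> 0 < piup X i j.
Proof.
move=> i_le j_lt; rewrite /piup -mulrDr.
have [x1 x2] : 0 < X i.-1 j /\ 0 < X i.-1 j.+1 by split; apply: Xpos; lia.
have z_gt0 : 0 < pirow X i j by apply: pirow_gt0; lia.
by rewrite divr_gt0 ?mulr_gt0 ?addr_gt0.
Qed.

Lemma positive_pimx i j : (0 < i <= n)%N -> (j <= m)%N -> positive (pimx X i j) n m.
Proof.
move=> i_le j_le a b a_le b_le; rewrite /pimx.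
case: ifP => [/andP[_ b_le']|_]; first by apply: pirow_gt0; lia.
case: ifP => [/andP[/andP[i_gt1 _] b_lt]|_]; last exact: Xpos.
by apply: piup_gt0; lia.
Qed.

End Positivity.

Lemma positive_Rmove X n m' m k : positive X n m' -> (k <= n)%N -> (m <= m')%N ->
  positive (Rmove m k X) n m'.
Proof.
elim: k m X => [|k IHk] [|m] X Xpos k_le m_le; rewrite ?Rmoven0 ?Rmove0n //.
by rewrite RmoveSS; apply: IHk; [apply: positive_pimx => //|..]; lia.
Qed.

Lemma positive_gRSK W n m k : positive W n m -> (k <= n)%N -> positive (gRSK k m W) n m.
Proof.
move=> Wpos; elim: k => [//|k IHk] k_le.
by rewrite gRSKS; apply: positive_Rmove; [apply: IHk|..]; lia.
Qed.

Lemma piup_pirow_ratio X n m i j : positive X n m -> (1 < i <= n)%N -> (0 < j < m)%N ->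
  1 / piup X i j + pirow X i j.-1 / pirow X i j = X i.-1 j / X i.-1 j.+1 + 1 / X i j.
Proof.
move=> Xpos i_le; case: j => [//|j] j_lt.
have [a_gt0 b_gt0 c_gt0] : [/\ 0 < X i.-1 j.+1, 0 < X i.-1 j.+2 & 0 < X i j.+1].
  by split; apply: Xpos; lia.
have z_ge0 : 0 <= pirow X i j by apply: (pirow_ge0 Xpos); lia.
have s_gt0 : 0 < X i.-1 j.+1 + pirow X i j by rewrite ltr_wpDr.
have d_gt0 : 0 < X i.-1 j.+2 + X i j.+1 * (X i.-1 j.+1 + pirow X i j).
  by rewrite addr_gt0 ?mulr_gt0.
rewrite /piup pirowS /border (_ : (i.-1 == 0%N) = false) /=; last by lia.
by field; rewrite -mulrDr !mulf_neq0 ?gt_eqF.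
Qed.

Lemma Rmove_first_row_ratio m X l : positive X 1 m -> (0 < l <= m)%N ->
  border (Rmove m 1 X) 1 l.-1 / Rmove m 1 X 1 l = 1 / X 1%N l.
Proof.
move=> Xpos; case: l => [//|l] l_le.
rewrite border_Rmove_last_row ?Rmove_last_row //=; try lia.
have z_gt0 : 0 < pirow X 1 l.
  by case: l l_le => [|l] l_le; [rewrite pirow0 /border ltr01 | apply: (pirow_gt0 Xpos); lia].
have x_gt0 : 0 < X 1%N l.+1 by apply: Xpos; lia.
by rewrite [pirow X 1 l.+1]pirowS /border /= add0r; field; rewrite !gt_eqF.
Qed.

Definition energy_term X (i j : nat) : R := (border X i.-1 j + border X i j.-1) / X i j.

Definition energy_sum X (k m : nat) : R :=
  \sum_(1 <= i < k.+1) \sum_(1 <= j < m.+1) energy_term X i j.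

Lemma eq_energy_term X Y i j : X i.-1 j = Y i.-1 j -> X i j.-1 = Y i j.-1 ->
  X i j = Y i j -> energy_term X i j = energy_term Y i j.
Proof.
move=> e1 e2 e3.
by rewrite /energy_term e3 (@border_eq X Y i.-1 j) ?(@border_eq X Y i j.-1).
Qed.

Lemma eq_energy_sum X Y k m : (forall i j, (i <= k)%N -> (j <= m)%N -> X i j = Y i j) ->
  energy_sum X k m = energy_sum Y k m.
Proof.
move=> eqXY; apply: eq_big_nat => i /andP[_ i_le]; apply: eq_big_nat => j /andP[_ j_le].
by apply: eq_energy_term; apply: eqXY; lia.
Qed.

Lemma energy_sum0 X k : energy_sum X k 0 = 0.
Proof. by rewrite /energy_sum big1 // => i _; rewrite big_geq. Qed.

Lemma energy_sumSS X k m : energy_sum X k.+1 m.+1 = energy_sum X k m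
  + \sum_(1 <= i < k.+1) energy_term X i m.+1 + \sum_(1 <= j < m.+2) energy_term X k.+1 j.
Proof.
rewrite /energy_sum (big_nat_recr k.+1) //= -big_split /=; congr (_ + _).
by apply: eq_bigr => i _; rewrite (big_nat_recr m.+1).
Qed.

Lemma energy_first_row m X : positive X 1 m ->
  \sum_(1 <= l < m.+1) energy_term (Rmove m 1 X) 1 l = \sum_(1 <= l < m.+1) 1 / X 1%N l.
Proof.
move=> Xpos; apply: eq_big_nat => l l_le.
by rewrite /energy_term [border _ 0 _]/border add0r Rmove_first_row_ratio.
Qed.

Lemma energy_last_rows k m X : positive X k.+2 m.+1 ->
  let Z := Rmove m.+1 k.+2 X in
  \sum_(1 <= l < m.+1) 1 / pimx X k.+2 m.+1 k.+1 l + energy_term Z k.+1 m.+1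
    + \sum_(1 <= l < m.+2) energy_term Z k.+2 l
  = \sum_(1 <= l < m.+2) energy_term X k.+1 l + \sum_(1 <= l < m.+2) 1 / X k.+2 l.
Proof.
move=> Xpos Z; set X' := pimx X k.+2 m.+1.
have Z_eq : Z = Rmove m k.+1 X' by rewrite /Z RmoveSS.
have Zout a b : (k.+2 < a)%N || (m + a < b + k.+1)%N -> Z a b = X a b.
  by move=> ab; rewrite /Z Rmove_out //; lia.
have -> : \sum_(1 <= l < m.+1) 1 / X' k.+1 l = \sum_(1 <= l < m.+1) 1 / piup X k.+2 l.
  by apply: eq_big_nat => l l_le; rewrite /X' pimx_up // ifT.
have -> : energy_term Z k.+1 m.+1 = (border X k m.+1 + border Z k.+1 m) / border X k.+1 m.+1.
  rewrite /energy_term [k.+1.-1]/=.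
  have -> : border Z k m.+1 = border X k m.+1 by apply: border_eq => _ _; apply: Zout; lia.
  by rewrite Zout //; lia.
have -> : \sum_(1 <= l < m.+2) energy_term Z k.+2 l =
    \sum_(1 <= l < m.+2) (border Z k.+1 l + pirow X k.+2 l.-1) / pirow X k.+2 l.
  apply: eq_big_nat => l /andP[l_ge1 l_le].
  by rewrite /energy_term /Z [k.+2.-1]/= border_Rmove_last_row ?Rmove_last_row //; lia.
have -> : \sum_(1 <= l < m.+2) energy_term X k.+1 l =
    \sum_(1 <= l < m.+2) (border X k l + border X k.+1 l.-1) / border X k.+1 l.
  by apply: eq_big_nat => -[//|l] _; rewrite /energy_term [border X k.+1 l.+1]/border.
apply: row_ratio_telescope.
- by move=> l l_le; rewrite /border /= (_ : (l == 0%N) = false) ?Xpos //; lia.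
- by move=> l l_le; apply: Xpos; lia.
- by [].
- by move=> l; rewrite pirowS.
- by move=> [|l] // _; rewrite /piup /border.
- by [].
- by apply: border_eq => _ _; apply: Zout; lia.
- move=> l l_lt; rewrite Z_eq !border_Rmove_last_row ?pirowS //; try lia.
  rewrite /X' pimx_up // ifT; last by lia.
  by congr (_ * (_ + _)); apply: border_eq => _ _; rewrite pimx_id //; lia.
Qed.

Lemma energy_sum_Rmove k m X : positive X k.+1 m ->
  energy_sum (Rmove m k.+1 X) k.+1 m = energy_sum X k m + \sum_(1 <= l < m.+1) 1 / X k.+1 l.
Proof.
elim: k m X => [|k IHk] [|m] X Xpos; try by rewrite !energy_sum0 big_geq ?addr0.
  by rewrite /energy_sum big_nat1 [in RHS]big_geq // add0r energy_first_row.
set X' := pimx X k.+2 m.+1; set Z := Rmove m.+1 k.+2 X.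
have X'pos : positive X' k.+1 m.
  by apply: (positive_le (positive_pimx Xpos _ _)); lia.
have Zout a b : (k.+2 < a)%N || (m + a < b + k.+1)%N -> Z a b = X a b.
  by move=> ab; rewrite /Z Rmove_out //; lia.
have last_col : \sum_(1 <= i < k.+2) energy_term Z i m.+1 =
    \sum_(1 <= i < k.+1) energy_term X i m.+1 + energy_term Z k.+1 m.+1.
  rewrite (big_nat_recr k.+1) //=; congr (_ + _).
  by apply: eq_big_nat => i i_le; apply: eq_energy_term; apply: Zout; lia.
rewrite energy_sumSS [in energy_sum Z _ _]/Z RmoveSS IHk // last_col.
rewrite (@eq_energy_sum X' X); last by move=> i j i_le _; rewrite /X' pimx_id //; lia.
rewrite energy_sumSS; have := energy_last_rows Xpos; rewrite /= -/Z.
lra.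
Qed.

Lemma energy_sum_gRSK k m W : positive W k m ->
  energy_sum (gRSK k m W) k m = \sum_(1 <= i < k.+1) \sum_(1 <= j < m.+1) 1 / W i j.
Proof.
elim: k => [|k IHk] Wpos; first by rewrite /energy_sum !big_geq.
rewrite gRSKS energy_sum_Rmove; last exact: positive_gRSK.
rewrite IHk; last exact: positive_le Wpos _ _.
rewrite [in RHS](big_nat_recr k.+1) //=; congr (_ + _).
by apply: eq_bigr => j _; rewrite gRSK_out.
Qed.

Definition col_ratio X (k c : nat) : R := \sum_(1 <= i < k.+1) border X i c.-1 / X i c.

Lemma col_ratio_Rmove k m c X : positive X k.+1 m -> (0 < c)%N -> (c + k <= m)%N ->
  col_ratio (Rmove m k.+1 X) k.+1 c = col_ratio X k c.+1 + 1 / X k.+1 c.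
Proof.
elim: k m X => [|k IHk] [|m] X Xpos c_gt0 c_le; try by exfalso; lia.
  by rewrite /col_ratio big_nat1 Rmove_first_row_ratio ?big_geq ?add0r //; lia.
set X' := pimx X k.+2 m.+1.
have X'pos : positive X' k.+1 m.
  by apply: (positive_le (positive_pimx Xpos _ _)); lia.
rewrite /col_ratio (big_nat_recr k.+2) //= -/(col_ratio _ k.+1 c).
rewrite [in col_ratio _ k.+1 c]RmoveSS IHk //; last by lia.
rewrite /col_ratio [in RHS](big_nat_recr k.+1) //= -!addrA; congr (_ + _).
  apply: eq_big_nat => i i_le; congr (_ / _); last by rewrite /X' pimx_id //; lia.
  by apply: border_eq => _ _; rewrite /X' pimx_id //; lia.
rewrite border_Rmove_last_row ?Rmove_last_row //; try lia.
rewrite /X' pimx_up // ifT; last by lia.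
rewrite (piup_pirow_ratio Xpos) //; try lia.
by rewrite /border /= (_ : (c == 0%N) = false) //; lia.
Qed.

Lemma col_ratio1 X k : (0 < k)%N -> col_ratio X k 1 = 1 / X 1%N 1%N.
Proof.
move=> k_gt0; rewrite /col_ratio big_ltn // big_nat_cond big1 ?addr0 //.
move=> i /andP[/andP[i_gt1 _] _].
have [i0 i1] : (i == 0%N) = false /\ (i == 1%N) = false by lia.
by rewrite /border i0 i1 mul0r.
Qed.

Definition antidiag_sum (p k : nat) X : R :=
  col_ratio X k (p - k).+1 + \sum_(k.+1 <= i < p.+1) 1 / X i (p - i).+1.

Lemma antidiag_sum_gRSK p k m W : positive W p m -> (p <= m)%N -> (k <= p)%N ->
  antidiag_sum p k (gRSK k m W) = antidiag_sum p 0 W.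
Proof.
move=> Wpos p_le; elim: k => [//|k IHk] k_lt.
rewrite -IHk; last by lia.
have Ypos : positive (gRSK k m W) k.+1 m.
  by apply: (positive_le (positive_gRSK Wpos _)); lia.
rewrite /antidiag_sum gRSKS col_ratio_Rmove //; try lia.
rewrite [in RHS](big_ltn (m := k.+1)) // (_ : (p - k.+1).+2 = (p - k).+1) -?addrA; last by lia.
congr (_ + (_ + _)); apply: eq_big_nat => i i_le.
by rewrite Rmove_out //; lia.
Qed.

Lemma gRSK_corner n m W : (0 < n)%N -> (0 < m)%N -> positive W n m ->
  1 / gRSK n m W 1%N 1%N = \sum_(1 <= i < (minn n m).+1) 1 / W i (minn n m - i).+1.
Proof.
move=> n_gt0 m_gt0 Wpos; set p := minn n m.
have := antidiag_sum_gRSK (positive_le Wpos (geq_minl _ _) (leqnn _)) (geq_minr _ _) (leqnn p).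
rewrite /antidiag_sum subnn big_geq // addr0 col_ratio1; last by lia.
by rewrite /col_ratio big_geq // add0r => <-; rewrite gRSK11.
Qed.

Lemma energy_sumE X n m : (0 < n)%N -> (0 < m)%N ->
  energy_sum X n m = \sum_(1 <= i < n.+1) \sum_(1 <= j < m.+1)
    (xz X i.-1 j + xz X i j.-1) / X i j + 1 / X 1%N 1%N.
Proof.
move=> n_gt0 m_gt0.
have -> : energy_sum X n m = \sum_(1 <= i < n.+1) \sum_(1 <= j < m.+1)
    (xz X i.-1 j + xz X i j.-1) / X i j
    + \sum_(1 <= i < n.+1) \sum_(1 <= j < m.+1) ((i == 1%N) && (j == 1%N))%:R / X i j.
  rewrite /energy_sum -big_split; apply: eq_big_nat => -[//|i] _.
  rewrite -big_split; apply: eq_big_nat => -[//|j] _.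
  by case: i j => [|i] [|j]; rewrite /energy_term /border /xz /=; ring.
congr (_ + _); rewrite big_ltn // big_nat_cond [X in _ + X]big1 ?addr0; last first.
  move=> i /andP[/andP[i_gt1 _] _]; rewrite big1 // => j _.
  by rewrite (_ : (i == 1%N) = false) ?mul0r //; lia.
rewrite big_ltn // big_nat_cond big1 ?addr0 // => j /andP[/andP[j_gt1 _] _].
by rewrite (_ : (j == 1%N) = false) ?mul0r //; lia.
Qed.

Local Open Scope complex_scope.

Lemma real_complex_sum2 (I J : Type) (r1 : seq I) (r2 : seq J) (P : I -> J -> bool)
    (F : I -> J -> R) :
  \sum_(i <- r1) \sum_(j <- r2 | P i j) (F i j)%:C
  = (\sum_(i <- r1) \sum_(j <- r2 | P i j) F i j)%:C.
Proof. by rewrite rmorph_sum; apply: eq_bigr => i _; rewrite rmorph_sum. Qed.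

Lemma mul_real_complex_sum (I : Type) (r : seq I) (s : R[i]) (F : I -> R) :
  \sum_(i <- r) s / (F i)%:C = s * (\sum_(i <- r) 1 / F i)%:C.
Proof.
by rewrite rmorph_sum mulr_sumr; apply: eq_bigr => i _; rewrite fmorph_div rmorph1 mul1r.
Qed.

End GeometricRSK.

Local Open Scope complex_scope.

Theorem theorem3p2 (R : realType) (n m : nat) (W : nat -> nat -> R) (s : R[i]) :
  (0 < n)%N -> (0 < m)%N ->
  (forall i j, (1 <= i <= n)%N -> (1 <= j <= m)%N -> (0 < W i j)%R) ->
  let p := minn n m in
  ((\sum_(1 <= i < p.+1) s / (W i (p - i).+1)%:C) +
   \sum_(1 <= i < n.+1) \sum_(1 <= j < m.+1 | (i + j != p.+1)%N)
      (1 / W i j)%:C)%R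
  = energy n m s (gRSK n m W).
Proof.
move=> n_gt0 m_gt0 Wpos p.
set T := gRSK n m W.
have corner : 1 / T 1%N 1%N = \sum_(1 <= i < p.+1) 1 / W i (p - i).+1 by exact: gRSK_corner.
have total := energy_sum_gRSK Wpos; rewrite energy_sumE // -/T in total.
rewrite /energy -/T mul_real_complex_sum real_complex_sum2.
rewrite (real_complex_sum2 _ _ (fun i j => i + j != p.+1)%N).
rewrite sum_antidiag_compl ?geq_minl ?geq_minr // -corner -total addrK.
by rewrite fmorph_div rmorph1 mul1r.
Qed.
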